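(* Let $T>0$, $0<M\le2$, $N=2$, and consider the problem of minimizing $\mathbb V(T)=\frac12(\xi_1(T)^2+\xi_2(T)^2)$ over $\alpha\in\mathcal U_M$, where $\dot\xi_i=-\xi_i+(1-\alpha_i)\bar\xi$ ($i=1,2$), $\bar\xi=\frac12(\xi_1+\xi_2)$, with initial datum satisfying $\bar\xi(0)>0$. If $\xi_1(0)=\xi_2(0)$, then a control $\alpha\in\mathcal U_M$ is optimal if and only if $\alpha_1+\alpha_2\equiv M$ and $\xi_1(T)=\xi_2(T)$.
   Context: $\mathcal U_M$ is the set of measurable $\alpha:[0,T]\to[0,1]^2$ with $\alpha_1(t)+\alpha_2(t)\le M$ for all $t$; ''$\equiv$'' means equality for (almost) all $t\in[0,T]$. *)

From HB Require Import structures.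
From mathcomp Require Import all_boot all_order all_algebra.
From mathcomp Require Import all_classical all_reals all_analysis.
Set Implicit Arguments. Unset Strict Implicit. Unset Printing Implicit Defensive.
Import Order.TTheory GRing.Theory Num.Theory.
Import numFieldNormedType.Exports.
Local Open Scope classical_set_scope.
Local Open Scope ring_scope.

Definition admissible (R : realType) (T M : R) (a1 a2 : R -> R) : Prop :=
  measurable_fun `[0, T]%classic a1 /\ measurable_fun `[0, T]%classic a2 /\
  (forall t, 0 <= t <= T ->
     [/\ 0 <= a1 t <= 1, 0 <= a2 t <= 1 & a1 t + a2 t <= M]).

Definition xibar (R : realType) (x1 x2 : R -> R) (t : R) : R :=
  (x1 t + x2 t) / 2.

Definition trajectory (R : realType) (T : R) (a1 a2 x1 x2 : R -> R)
    (c1 c2 : R) : Prop :=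
  {within `[0, T], continuous x1} /\ {within `[0, T], continuous x2} /\
  (forall t, 0 <= t <= T ->
     x1 t = c1 + Rintegral lebesgue_measure `[0, t]%classic
                  (fun s => - x1 s + (1 - a1 s) * xibar x1 x2 s)) /\
  (forall t, 0 <= t <= T ->
     x2 t = c2 + Rintegral lebesgue_measure `[0, t]%classic
                  (fun s => - x2 s + (1 - a2 s) * xibar x1 x2 s)).

Definition cost (R : realType) (T : R) (x1 x2 : R -> R) : R :=
  (x1 T ^+ 2 + x2 T ^+ 2) / 2.

Definition optimal (R : realType) (T M c1 c2 : R) (a1 a2 x1 x2 : R -> R) : Prop :=
  admissible T M a1 a2 /\ trajectory T a1 a2 x1 x2 c1 c2 /\
  forall b1 b2 y1 y2 : R -> R, admissible T M b1 b2 ->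
    trajectory T b1 b2 y1 y2 c1 c2 -> cost T x1 x2 <= cost T y1 y2.

From HB Require Import structures.
From mathcomp Require Import all_boot all_order all_algebra.
From mathcomp Require Import all_classical all_reals all_analysis.
From mathcomp Require Import ring lra.
From mathcomp Require Import measurable_realfun.
Set Implicit Arguments.
Unset Strict Implicit.
Unset Printing Implicit Defensive.
Import Order.TTheory GRing.Theory Num.Theory.
Import numFieldNormedType.Exports.
Local Open Scope classical_set_scope.
Local Open Scope ring_scope.

(* Write [S = xi1 + xi2] and [s = alpha1 + alpha2]. Summing the state
   equations gives [S' = - s S / 2], so [S] stays positive and, as [s <= M],
   [S(T) >= S(0) e^(-MT/2)], with equality iff [s = M] almost everywhere.
   Since [V(T) = (S(T)/2)^2 + ((xi1 - xi2)(T)/2)^2], the value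
   [(c e^(-MT/2))^2] is a lower bound for the cost; it is attained by the
   constant control [alpha1 = alpha2 = M/2], and by a control exactly when
   [s = M] a.e. and [xi1(T) = xi2(T)].
   The state is only a Caratheodory solution, so rather than differentiating
   [S] we use its C^1 primitive [P], which satisfies
   [P' + (M/2) P = S(0) + J/2] with [J t = int_0^t (M - s) S]; while [S >= 0],
   [J] is nonnegative and nondecreasing, and comparison with the exponential
   solution of [P' + (M/2) P = K] gives the bounds. *)

Section DifferentialInequality.
Context {R : realType}.

Lemma is_derive_shift_expR (k K : R) (P : R -> R) (t p : R) :
  is_derive t 1 P p ->
  is_derive t 1 (fun u => (P u - K) * expR (k * u))
    ((p + k * (P t - K)) * expR (k * t)).
Proof.
move=> dP.
have dPK : is_derive t 1 (fun u => P u - K) p.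
  by have := is_deriveB dP (is_derive_cst K t 1); rewrite subr0.
have dkt : is_derive t 1 (fun u : R => k * u) k.
  by have := is_deriveZ k (is_derive_id t (1 : R)); rewrite /GRing.scale /= mulr1.
have dE : is_derive t 1 (fun u => expR (k * u)) (expR (k * t) * k).
  exact: (is_derive1_comp (f := expR) (g := fun u : R => k * u)).
have := is_deriveM dPK dE.
suff -> : (P t - K) *: (expR (k * t) * k) + expR (k * t) *: p =
          (p + k * (P t - K)) * expR (k * t) by [].
by rewrite /GRing.scale /=; ring.
Qed.

Lemma continuous_shift_expR (A : set R) (k K : R) (P : R -> R) :
  {within A, continuous P} ->
  {within A, continuous (fun u => (P u - K) * expR (k * u))}.
Proof.
move=> cP x.
apply: (@continuousM _ (subspace A) (fun u => P u - K) (fun u => expR (k * u))).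
  apply: (@continuousB _ _ (subspace A) P (cst K)); first exact: cP.
  exact: cst_continuous.
apply: (continuous_subspaceT (f := fun u : R => expR (k * u))) => y.
apply: continuous_comp; last exact: continuous_expR.
exact: continuousZr.
Qed.

(* [u |-> (P u - K/k) e^(k u)] is nonincreasing, whence the bound at [tau]. *)
Lemma diff_ineq_expR_le (k tau K : R) (P P' : R -> R) :
  0 < k -> 0 < tau ->
  {within `[0, tau], continuous P} -> P 0 = 0 ->
  (forall t, 0 < t < tau -> is_derive t 1 P (P' t)) ->
  (forall t, 0 < t < tau -> k * P t + P' t <= K) ->
  K * expR (- (k * tau)) <= K - k * P tau.
Proof.
move=> k0 tau0 cP P0 dP hK.
pose Phi u := (P u - K / k) * expR (k * u).
have dPhi t : 0 < t < tau ->
    is_derive t 1 Phi ((P' t + k * (P t - K / k)) * expR (k * t)).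
  by move=> /dP; exact: is_derive_shift_expR.
have Phi_tau : Phi tau <= Phi 0.
  have itv x : x \in `]0, tau[ -> 0 < x < tau by rewrite in_itv.
  apply: (ler0_derive1_le_cc _ _ (@continuous_shift_expR _ k (K / k) _ cP)).
  - by move=> x /itv /dPhi dd; exact: ex_derive.
  - move=> x /itv hx; have dd := dPhi x hx; rewrite derive1E derive_val.
    rewrite pmulr_lle0 ?expR_gt0//.
    by have := hK x hx; rewrite mulrBr mulrCA divff ?gt_eqF// mulr1; lra.
  - by rewrite in_itv /= lexx ltW.
  - by rewrite in_itv /= lexx ltW.
  - exact: ltW.
move: Phi_tau; rewrite /Phi mulr0 expR0 mulr1 P0 sub0r.
rewrite -ler_pdivlMr ?expR_gt0// -expRN => h.
have k_neq0 : k != 0 by rewrite gt_eqF.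
have := ler_wpM2l (ltW k0) h.
have -> : k * (P tau - K / k) = k * P tau - K by field.
have -> : k * (- (K / k) * expR (- (k * tau))) = - (K * expR (- (k * tau))).
  by field.
lra.
Qed.

Lemma diff_ineq_expR_ge (k tau K : R) (P P' : R -> R) :
  0 < k -> 0 < tau ->
  {within `[0, tau], continuous P} -> P 0 = 0 ->
  (forall t, 0 < t < tau -> is_derive t 1 P (P' t)) ->
  (forall t, 0 < t < tau -> K <= k * P t + P' t) ->
  K - k * P tau <= K * expR (- (k * tau)).
Proof.
move=> k0 tau0 cP P0 dP hK.
have cN : {within `[0, tau], continuous (fun u => - P u)}.
  by move=> x; apply: (@continuousN _ _ (subspace `[0, tau]) P); exact: cP.
have dN t : 0 < t < tau -> is_derive t 1 (fun u => - P u) (- P' t).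
  by move=> /dP; exact: is_deriveN.
have NP0 : (fun u => - P u) 0 = 0 by rewrite /= P0 oppr0.
suff : - K * expR (- (k * tau)) <= - K - k * - P tau by lra.
have := @diff_ineq_expR_le k tau (- K) _ _ k0 tau0 cN NP0 dN.
by apply=> t /hK; lra.
Qed.

End DifferentialInequality.

Section ContinuousInduction.
Context {R : realType}.

Lemma continuous_within_dist_lt (A : set R) (S : R -> R) (z : R) :
  {within A, continuous S} -> A z ->
  forall e, 0 < e -> exists2 d, 0 < d &
    forall u, A u -> `|z - u| < d -> `|S z - S u| < e.
Proof.
move=> cS Az e e0.
have := (proj1 (subspace_continuousP _ _) cS) z Az.
move=> /cvgrPdist_lt /(_ e e0); rewrite near_withinE => /nbhs_ballP [d d0 H].
by exists d => // u Au zu; apply: H.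
Qed.

Lemma ge0_of_gt0_left (T z : R) (S : R -> R) :
  {within `[0, T], continuous S} -> 0 < z <= T ->
  (forall u, 0 <= u < z -> 0 < S u) -> 0 <= S z.
Proof.
move=> cS /andP[z0 zT] below; rewrite leNgt; apply/negP => Sz_lt0.
have z_itv : `[0, T]%classic z by rewrite /= in_itv /= ltW.
have [d d0 Hd] : exists2 d, 0 < d &
    forall u, `[0, T]%classic u -> `|z - u| < d -> `|S z - S u| < - S z.
  by apply: continuous_within_dist_lt; rewrite // oppr_gt0.
pose u := Num.max 0 (z - d / 2).
have u0 : 0 <= u by rewrite le_max lexx.
have uz : u < z by rewrite gt_max z0 /= ltrBlDr ltrDl divr_gt0.
have Su : 0 < S u by apply: below; rewrite u0 uz.
have : `|S z - S u| < - S z.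
  apply: Hd; first by rewrite /= in_itv /= u0 (le_trans (ltW uz) zT).
  rewrite ger0_norm ?subr_ge0 ?(ltW uz)//.
  have : z - d / 2 <= u by rewrite le_max lexx orbT.
  lra.
by rewrite distrC; have := ler_norm (S u - S z); lra.
Qed.

Lemma le0_at_inf (T : R) (S : R -> R) (A : set R) :
  {within `[0, T], continuous S} -> A !=set0 ->
  (forall t, A t -> 0 <= t <= T /\ S t <= 0) -> S (inf A) <= 0.
Proof.
move=> cS [a0 Aa0] hA.
have Alb : has_lbound A by exists 0 => t /hA [/andP[]].
have z_le a : A a -> inf A <= a by move=> Aa; exact: ge_inf Alb a Aa.
have z_itv : `[0, T]%classic (inf A).
  have [/andP[_ a0T] _] := hA a0 Aa0.
  rewrite /= in_itv /= (le_trans (z_le a0 Aa0) a0T) andbT.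
  by apply: lb_le_inf; [exists a0 | move=> t /hA [/andP[]]].
rewrite leNgt; apply/negP => Sz_gt0.
have [d d0 Hd] := continuous_within_dist_lt cS z_itv Sz_gt0.
have [a Aa az] := inf_adherent d0 (conj (ex_intro _ a0 Aa0) Alb).
have [aT Sa] := hA a Aa.
have : `|S (inf A) - S a| < S (inf A).
  apply: Hd; first by rewrite /= in_itv.
  by rewrite distrC ger0_norm ?subr_ge0 ?z_le //; lra.
by have := ler_norm (S (inf A) - S a); lra.
Qed.

Lemma continuous_induction_gt0 (T : R) (S : R -> R) :
  {within `[0, T], continuous S} -> 0 < S 0 ->
  (forall tau, 0 < tau <= T ->
     (forall u, 0 <= u <= tau -> 0 <= S u) -> 0 < S tau) ->
  forall u, 0 <= u <= T -> 0 < S u.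
Proof.
move=> cS S0 step; apply: contrapT => /existsNP [u0 /not_implyP [u0T /negP]].
rewrite -leNgt => Su0.
pose A := [set t | 0 <= t <= T /\ S t <= 0].
have Alb : has_lbound A by exists 0 => t [/andP[]].
have z_le a : A a -> inf A <= a by move=> Aa; exact: ge_inf Alb a Aa.
have Sz : S (inf A) <= 0 by apply: (le0_at_inf cS) => //; exists u0.
have z0 : 0 <= inf A by apply: lb_le_inf; [exists u0 | move=> t [/andP[]]].
have zT : inf A <= T by have /andP[_ u0T'] := u0T; exact: le_trans (z_le u0 _) u0T'.
have below u : 0 <= u < inf A -> 0 < S u.
  move=> /andP[u_ge0 uz]; rewrite ltNge; apply/negP => Su.
  have : inf A <= u by apply: z_le; split => //; rewrite u_ge0 (le_trans (ltW uz)).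
  by rewrite leNgt uz.
have z_gt0 : 0 < inf A.
  by rewrite lt_def z0 andbT; apply/eqP => z_eq0; move: Sz; rewrite z_eq0 leNgt S0.
have Sz_ge0 : 0 <= S (inf A) by apply: (ge0_of_gt0_left cS); rewrite ?z_gt0.
suff : 0 < S (inf A) by rewrite ltNge Sz.
apply: step; first by rewrite z_gt0.
move=> u /andP[u0' uz]; have [->|uz'] := eqVneq u (inf A); first exact: Sz_ge0.
by apply/ltW/below; rewrite u0' lt_neqAle uz' uz.
Qed.

End ContinuousInduction.

Section BoundedMeasurable.
Context {R : realType}.
Variable T : R.

Definition bounded_measurable_on (f : R -> R) :=
  measurable_fun `[0, T]%classic f /\
  exists B : R, forall u, 0 <= u <= T -> `|f u| <= B.

Lemma bounded_measurable_integrable (f : R -> R) (t : R) :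
  bounded_measurable_on f -> 0 <= t <= T ->
  (@lebesgue_measure R).-integrable `[0, t]%classic (EFin \o f).
Proof.
move=> [mf [B HB]] /andP[t0 tT].
apply: measurable_bounded_integrable.
- exact: measurable_itv.
- exact: compact_finite_measure (@segment_compact R 0 t).
- apply: (measurable_funS (E := `[0, T]%classic)) => //.
  by apply: subset_itv; rewrite bnd_simp.
- exists B; split; first exact: num_real.
  move=> r Br u; rewrite /= in_itv /= => /andP[u0 ut].
  by apply: le_trans (ltW Br); apply: HB; rewrite u0 (le_trans ut).
Qed.

Lemma bounded_measurable_cst (r : R) : bounded_measurable_on (fun _ => r).
Proof. by split; [exact: measurable_cst | exists `|r|]. Qed.

Lemma bounded_measurableD (f g : R -> R) :
  bounded_measurable_on f -> bounded_measurable_on g ->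
  bounded_measurable_on (fun u => f u + g u).
Proof.
move=> [mf [B1 H1]] [mg [B2 H2]]; split; first exact: measurable_funD.
exists (B1 + B2) => u hu.
by rewrite (le_trans (ler_normD _ _)) // lerD ?H1 ?H2.
Qed.

Lemma bounded_measurableM (f g : R -> R) :
  bounded_measurable_on f -> bounded_measurable_on g ->
  bounded_measurable_on (fun u => f u * g u).
Proof.
move=> [mf [B1 H1]] [mg [B2 H2]]; split; first exact: measurable_funM.
by exists (B1 * B2) => u hu; rewrite normrM ler_pM ?H1 ?H2.
Qed.

Lemma bounded_measurableN (f : R -> R) :
  bounded_measurable_on f -> bounded_measurable_on (fun u => - f u).
Proof.
move=> bf; have := bounded_measurableM (bounded_measurable_cst (-1)) bf.
by congr bounded_measurable_on; apply: funext => u; rewrite mulN1r.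
Qed.

Lemma continuous_bounded_measurable (f : R -> R) : 0 <= T ->
  {within `[0, T], continuous f} -> bounded_measurable_on f.
Proof.
move=> T0 cf; split.
  by apply: subspace_continuous_measurable_fun => //; exact: measurable_itv.
have [B [_ HB]] :=
  compact_bounded (continuous_compact cf (@segment_compact R 0 T)).
exists (B + 1) => u hu; apply: (HB (B + 1)); first by rewrite ltrDl.
by exists u => //; rewrite /= in_itv /= hu.
Qed.

Lemma admissible_bounded_measurable (M : R) (a1 a2 : R -> R) :
  admissible T M a1 a2 -> bounded_measurable_on a1 /\ bounded_measurable_on a2.
Proof.
move=> [m1 [m2 H]]; split; split => //; exists 1 => u /H.
  by case=> /andP[u0 u1] _ _; rewrite ger0_norm.
by case=> _ /andP[u0 u1] _; rewrite ger0_norm.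
Qed.

End BoundedMeasurable.

Definition saturated {R : realType} (T M : R) (a1 a2 : R -> R) :=
  {ae (@lebesgue_measure R), forall t, 0 <= t <= T -> a1 t + a2 t = M}.

Section StateSum.
Context {R : realType}.
Variables (T M c1 c2 : R) (a1 a2 x1 x2 : R -> R).
Hypotheses (T0 : 0 < T) (M0 : 0 < M) (c12 : 0 < c1 + c2).
Hypotheses (adm : admissible T M a1 a2) (tr : trajectory T a1 a2 x1 x2 c1 c2).

Let S u := x1 u + x2 u.
Let s u := a1 u + a2 u.
Let h u := (M - s u) * S u.
Let P t := \int[lebesgue_measure]_(u in `[0, t]) S u.
Let J t := \int[lebesgue_measure]_(u in `[0, t]) h u.

Local Notation bounded_measurable := (bounded_measurable_on T).

Let T_itv : 0 <= T <= T. Proof. by rewrite lexx ltW. Qed.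

Lemma state_sum_continuous : {within `[0, T], continuous S}.
Proof.
have [cx1 [cx2 _]] := tr; move=> x.
by apply: (@continuousD _ _ (subspace `[0, T]) x1 x2); [exact: cx1 | exact: cx2].
Qed.

Lemma state_bounded_measurable :
  bounded_measurable x1 /\ bounded_measurable x2.
Proof.
have [cx1 [cx2 _]] := tr.
by split; apply: continuous_bounded_measurable; rewrite // ltW.
Qed.

Lemma state_sum_bounded_measurable : bounded_measurable S.
Proof.
by have [? ?] := state_bounded_measurable; exact: bounded_measurableD.
Qed.

Lemma control_sum_bounded_measurable : bounded_measurable s.
Proof.
by have [? ?] := admissible_bounded_measurable adm; exact: bounded_measurableD.
Qed.

Lemma slack_bounded_measurable : bounded_measurable h.
Proof.
apply: bounded_measurableM state_sum_bounded_measurable.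
apply: bounded_measurableD (bounded_measurable_cst _ _) _.
exact: bounded_measurableN control_sum_bounded_measurable.
Qed.

Lemma state_sum_eq t : 0 <= t <= T ->
  S t = c1 + c2 - 2^-1 * \int[lebesgue_measure]_(u in `[0, t]) (s u * S u).
Proof.
move=> ht; have [_ [_ [e1 e2]]] := tr.
have [bx1 bx2] := state_bounded_measurable.
have [ba1 ba2] := admissible_bounded_measurable adm.
have bxibar : bounded_measurable (xibar x1 x2).
  exact: bounded_measurableM state_sum_bounded_measurable
    (bounded_measurable_cst _ 2^-1).
have bf (a x : R -> R) : bounded_measurable a -> bounded_measurable x ->
    bounded_measurable (fun u => - x u + (1 - a u) * xibar x1 x2 u).
  move=> ba bx; apply: bounded_measurableD (bounded_measurableN bx) _.
  apply: bounded_measurableM bxibar.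
  exact: bounded_measurableD (bounded_measurable_cst _ _) (bounded_measurableN ba).
have i1 := bounded_measurable_integrable (bf _ _ ba1 bx1) ht.
have i2 := bounded_measurable_integrable (bf _ _ ba2 bx2) ht.
have isS := bounded_measurable_integrable
  (bounded_measurableM control_sum_bounded_measurable state_sum_bounded_measurable) ht.
have mt : measurable (`[0, t]%classic : set (measurableTypeR R)).
  exact: measurable_itv.
rewrite /S (e1 t ht) (e2 t ht) addrACA -(RintegralD mt i1 i2).
rewrite -mulNr -(RintegralZl _ mt isS).
congr (_ + _); apply: eq_Rintegral => u _.
by rewrite /xibar /s /S; field.
Qed.

Lemma state_sum0 : S 0 = c1 + c2.
Proof.
have h0 : (0 : R) <= 0 <= T by rewrite lexx ltW.
by rewrite (state_sum_eq h0) set_itv1 Rintegral_set1 mulr0 subr0.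
Qed.

Lemma primitive_eq t : 0 <= t <= T ->
  M / 2 * P t + S t = c1 + c2 + 2^-1 * J t.
Proof.
move=> ht; rewrite (state_sum_eq ht) /P /J /h.
have iS := bounded_measurable_integrable state_sum_bounded_measurable ht.
have iMS := bounded_measurable_integrable
  (bounded_measurableM (bounded_measurable_cst _ M) state_sum_bounded_measurable) ht.
have isS := bounded_measurable_integrable
  (bounded_measurableM control_sum_bounded_measurable state_sum_bounded_measurable) ht.
have -> : \int[lebesgue_measure]_(u in `[0, t]) ((M - s u) * S u) =
          \int[lebesgue_measure]_(u in `[0, t]) (M * S u - s u * S u).
  by apply: eq_Rintegral => u _; ring.
have mt : measurable (`[0, t]%classic : set (measurableTypeR R)).
  exact: measurable_itv.
by rewrite (RintegralB mt iMS isS) (RintegralZl _ mt iS); ring.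
Qed.

Lemma primitive0 : P 0 = 0.
Proof. by rewrite /P set_itv1 Rintegral_set1. Qed.

Lemma primitive_continuous tau : 0 <= tau <= T ->
  {within `[0, tau], continuous P}.
Proof.
move=> /andP[_ tauT].
apply: (continuous_subspaceW (B := `[0, T]%classic)).
  by apply: subset_itv; rewrite bnd_simp.
exact: parameterized_integral_continuous (ltW T0)
  (bounded_measurable_integrable state_sum_bounded_measurable T_itv).
Qed.

Lemma primitive_derive t : 0 < t < T -> is_derive t 1 P (S t).
Proof.
move=> /andP[t0 tT].
have cSt : {for t, continuous S}.
  have [+ _ _] := (continuous_within_itvP _ T0).1 state_sum_continuous.
  by apply; rewrite in_itv /= t0 tT.
have [d1 d2] := continuous_FTC1_closed tT
  (bounded_measurable_integrable state_sum_bounded_measurable T_itv) t0 cSt.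
rewrite /P; exact: DeriveDef d1 (etrans (esym (derive1E _ _)) d2).
Qed.

Lemma slack_ge0 u : 0 <= u <= T -> 0 <= S u -> 0 <= h u.
Proof.
move=> hu Su; rewrite /h mulr_ge0 // subr_ge0.
by have [_ [_ /(_ u hu) []]] := adm.
Qed.

Lemma slack_integral_ge0 t : t <= T ->
  (forall u, 0 <= u <= t -> 0 <= S u) -> 0 <= J t.
Proof.
move=> tT Spos; apply: Rintegral_ge0 => u; rewrite /= in_itv /= => /andP[u0 ut].
by apply: slack_ge0; [rewrite u0 (le_trans ut tT) | rewrite Spos // u0].
Qed.

Lemma slack_integral_le t tau : 0 <= t <= tau -> tau <= T ->
  (forall u, 0 <= u <= tau -> 0 <= S u) -> J t <= J tau.
Proof.
move=> /andP[t0 ttau] tauT Spos.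
have htau : 0 <= tau <= T by rewrite (le_trans t0 ttau) tauT.
rewrite -subr_ge0 /J (@Rintegral_itvB _ h (BLeft 0) (BRight tau) t); last 3 first.
- exact: bounded_measurable_integrable slack_bounded_measurable htau.
- by rewrite bnd_simp.
- by rewrite bnd_simp.
apply: Rintegral_ge0 => u; rewrite /= in_itv /= => /andP[tu utau].
have u0 : 0 <= u by rewrite (le_trans t0 (ltW tu)).
by apply: slack_ge0; [rewrite u0 (le_trans utau tauT) | rewrite Spos // u0].
Qed.

Let E tau := expR (- (M / 2 * tau)).

(* For [t <= tau], [P' + (M/2) P = c1 + c2 + J t / 2 <= c1 + c2 + J tau / 2]
   since [J] is nondecreasing while [S >= 0]. *)
Lemma state_sum_ge_expR tau : 0 < tau <= T ->
  (forall u, 0 <= u <= tau -> 0 <= S u) ->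
  (c1 + c2 + 2^-1 * J tau) * E tau <= S tau.
Proof.
move=> /andP[tau0 tauT] Spos.
have htau : 0 <= tau <= T by rewrite ltW.
have k0 : 0 < M / 2 by rewrite divr_gt0.
have dP t : 0 < t < tau -> is_derive t 1 P (S t).
  by move=> /andP[t0 tt]; apply: primitive_derive; rewrite t0 (lt_le_trans tt).
have SE : S tau = c1 + c2 + 2^-1 * J tau - M / 2 * P tau.
  by rewrite -(primitive_eq htau); ring.
rewrite SE; apply: (diff_ineq_expR_le k0 tau0 (primitive_continuous htau)
  primitive0 dP) => t /andP[t0 tt].
have ht : 0 <= t <= T by rewrite ltW //= (le_trans (ltW tt) tauT).
rewrite (primitive_eq ht) lerD2l ler_pM2l ?invr_gt0 //.
by apply: slack_integral_le => //; rewrite !ltW.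
Qed.

Lemma state_sum_gt0 u : 0 <= u <= T -> 0 < S u.
Proof.
move: u; apply: (continuous_induction_gt0 state_sum_continuous).
  by rewrite state_sum0.
move=> tau htau Spos; apply: lt_le_trans (state_sum_ge_expR htau Spos).
rewrite mulr_gt0 ?expR_gt0 // ltr_wpDr // mulr_ge0 ?invr_ge0 //.
by apply: slack_integral_ge0 => //; case/andP: htau.
Qed.

Let S_ge0 u : 0 <= u <= T -> 0 <= S u.
Proof. by move=> /state_sum_gt0/ltW. Qed.

Lemma state_sum_lower_bound : (c1 + c2) * E T <= S T.
Proof.
have hT : 0 < T <= T by rewrite T0 lexx.
apply: le_trans (state_sum_ge_expR hT S_ge0).
rewrite ler_pM2r ?expR_gt0 // lerDl mulr_ge0 ?invr_ge0 //.
exact: slack_integral_ge0.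
Qed.

Lemma state_sum_of_slack0 : (forall t, 0 <= t <= T -> J t = 0) ->
  S T = (c1 + c2) * E T.
Proof.
move=> J0.
have k0 : 0 < M / 2 by rewrite divr_gt0.
have eqK t : 0 < t < T -> M / 2 * P t + S t = c1 + c2.
  by move=> /andP[t0 tT]; rewrite primitive_eq ?J0 ?mulr0 ?addr0 // !ltW.
have -> : S T = c1 + c2 - M / 2 * P T.
  by have := primitive_eq T_itv; rewrite J0 // mulr0 addr0 => <-; ring.
apply/eqP; rewrite eq_le; apply/andP; split.
- apply: (diff_ineq_expR_ge k0 T0 (primitive_continuous T_itv) primitive0
    primitive_derive).
  by move=> t /eqK ->.
- apply: (diff_ineq_expR_le k0 T0 (primitive_continuous T_itv) primitive0
    primitive_derive).
  by move=> t /eqK ->.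
Qed.

Let measurable_slack t : 0 <= t <= T ->
  measurable_fun `[0, t]%classic (EFin \o h).
Proof.
move=> /andP[t0 tT]; apply/measurable_EFinP.
apply: (measurable_funS (E := `[0, T]%classic)) => //.
- by apply: subset_itv; rewrite bnd_simp.
- exact: slack_bounded_measurable.1.
Qed.

Lemma slack_integral0_of_saturated : saturated T M a1 a2 ->
  forall t, 0 <= t <= T -> J t = 0.
Proof.
move=> sat t ht.
rewrite /J /Rintegral.
have -> : (\int[lebesgue_measure]_(u in `[0%R, t]) (EFin \o h) u =
           \int[lebesgue_measure]_(u in `[0%R, t]) (cst 0 u))%E.
  apply: (ae_eq_integral (cst 0)).
  - exact: measurable_itv.
  - exact: measurable_slack.
  - exact: measurable_cst.
  apply: (@filterS _ _ (ae_filter_ringOfSetsType _) _ _ _ sat) => u sat_u.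
  rewrite /= in_itv /= => /andP[u0 ut].
  have /andP[_ tT] := ht.
  by rewrite /h /s sat_u ?u0 ?(le_trans ut tT) // subrr mul0r.
by rewrite integral0.
Qed.

(* [h >= 0] has zero integral, so it vanishes a.e.; since [S > 0], the
   factor [M - s] does. *)
Lemma saturated_of_slack_integral0 : J T = 0 -> saturated T M a1 a2.
Proof.
move=> JT.
have mT : measurable (`[0%R, T]%classic : set (measurableTypeR R)).
  exact: measurable_itv.
have fin : (\int[lebesgue_measure]_(u in `[0%R, T]) (EFin \o h) u)%E \is a fin_num.
  apply: (integrable_fin_num _
    (bounded_measurable_integrable slack_bounded_measurable T_itv)).
  exact: measurable_itv.
have Iabs : (\int[lebesgue_measure]_(u in `[0%R, T]) `|(EFin \o h) u| = 0)%E.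
  transitivity (\int[lebesgue_measure]_(u in `[0%R, T]) (EFin \o h) u)%E.
    apply: eq_integral => u; rewrite inE /= in_itv /= => hu.
    by rewrite ger0_norm // slack_ge0 // S_ge0.
  by rewrite -(fineK fin); move: JT; rewrite /J /Rintegral => ->.
have := (ae_eq_integral_abs lebesgue_measure mT (measurable_slack T_itv)).1 Iabs.
apply: (@filterS _ _ (ae_filter_ringOfSetsType _)) => u h0 hu.
have : h u = 0 by have := h0; rewrite /= in_itv /= => /(_ hu) [->].
rewrite /h => /eqP; rewrite mulf_eq0 (gt_eqF (state_sum_gt0 hu)) orbF subr_eq0.
by move/eqP ->.
Qed.

Lemma state_sum_eq_min_iff :
  S T = (c1 + c2) * E T <-> saturated T M a1 a2.
Proof.
split=> [SET | sat]; last first.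
  exact/state_sum_of_slack0/slack_integral0_of_saturated.
apply: saturated_of_slack_integral0.
have hT : 0 < T <= T by rewrite T0 lexx.
have := state_sum_ge_expR hT S_ge0.
rewrite SET ler_pM2r ?expR_gt0 // gerDl pmulr_rle0 ?invr_gt0 // => J_le0.
by apply/eqP; rewrite eq_le J_le0 slack_integral_ge0.
Qed.

End StateSum.

Section ConstantControl.
Context {R : realType}.
Variables (T b c : R).

Let Y u := c * expR (- b * u).

Lemma is_derive_constant_control_state (t : R) : is_derive t 1 Y (- b * Y t).
Proof.
have := is_derive_shift_expR (- b) (- c) (is_derive_cst (0 : R) t (1 : R)).
by rewrite /cst sub0r opprK add0r -mulrA.
Qed.

Lemma continuous_constant_control_state : continuous Y.
Proof.
move=> x; apply: (@continuousM _ R (cst c) (fun u => expR (- b * u))).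
  exact: cst_continuous.
apply: continuous_comp; last exact: continuous_expR.
exact: continuousZr.
Qed.

Lemma constant_control_trajectory :
  trajectory T (fun _ => b) (fun _ => b) Y Y c c.
Proof.
have cY := continuous_constant_control_state.
have eqY t : 0 <= t <= T -> Y t = c + \int[lebesgue_measure]_(s in `[0, t])
                  (- Y s + (1 - b) * xibar Y Y s).
  move=> /andP[t0 _].
  rewrite (@eq_Rintegral _ _ _ lebesgue_measure _ (fun s => - b * Y s)); last first.
    by move=> u _; rewrite /xibar; field.
  have [<-|t_neq0] := eqVneq 0 t.
    by rewrite set_itv1 Rintegral_set1 addr0 /Y mulr0 expR0 mulr1.
  have t_gt0 : 0 < t by rewrite lt_def eq_sym t_neq0 t0.
  rewrite /Rintegral (@continuous_FTC2 _ (fun s => - b * Y s) Y 0 t t_gt0) /=.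
  - by rewrite /Y mulr0 expR0 mulr1; ring.
  - apply: continuous_subspaceT => x.
    by apply: (@continuousM _ R (cst (- b)) Y); [exact: cst_continuous | exact: cY].
  - split.
    + by move=> x _; have dY := is_derive_constant_control_state x; exact: ex_derive.
    + exact/cvg_at_right_filter/cY.
    + exact/cvg_at_left_filter/cY.
  - move=> x _; have dY := is_derive_constant_control_state x.
    by rewrite derive1E derive_val.
by split; [exact: continuous_subspaceT | split; [exact: continuous_subspaceT |]].
Qed.

End ConstantControl.

Lemma halves_admissible {R : realType} (T M : R) :
  0 < M <= 2 -> admissible T M (fun _ => M / 2) (fun _ => M / 2).
Proof.
move=> /andP[M0 M2].
have hM : 0 <= M / 2 <= 1 by rewrite divr_ge0 ?ler_pdivrMr ?mul1r // ltW.
by do 2 (split; first exact: measurable_cst); move=> t _; rewrite hM -splitr.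
Qed.

Lemma cost_sum_diff {R : realType} (T : R) (y1 y2 : R -> R) :
  cost T y1 y2 = ((y1 T + y2 T) / 2) ^+ 2 + ((y1 T - y2 T) / 2) ^+ 2.
Proof. by rewrite /cost; field. Qed.

Section MinimalCost.
Context {R : realType}.
Variables (T M c : R).
Hypotheses (T0 : 0 < T) (M0 : 0 < M) (c0 : 0 < c).

Let m := c * expR (- (M / 2 * T)).

Lemma cost_ge_min (b1 b2 y1 y2 : R -> R) :
  admissible T M b1 b2 -> trajectory T b1 b2 y1 y2 c c -> m ^+ 2 <= cost T y1 y2.
Proof.
move=> adm tr; have cc0 : 0 < c + c by rewrite addr_gt0.
have := state_sum_lower_bound T0 M0 cc0 adm tr.
rewrite mulrDl -/m cost_sum_diff => low.
have m0 : 0 < m by rewrite mulr_gt0 ?expR_gt0.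
have m2A : m ^+ 2 <= ((y1 T + y2 T) / 2) ^+ 2 by rewrite ler_sqr ?nnegrE; lra.
by have := sqr_ge0 ((y1 T - y2 T) / 2); lra.
Qed.

Lemma cost_eq_min_iff (b1 b2 y1 y2 : R -> R) :
  admissible T M b1 b2 -> trajectory T b1 b2 y1 y2 c c ->
  cost T y1 y2 = m ^+ 2 <-> saturated T M b1 b2 /\ y1 T = y2 T.
Proof.
move=> adm tr; have cc0 : 0 < c + c by rewrite addr_gt0.
have := state_sum_eq_min_iff T0 M0 cc0 adm tr.
rewrite mulrDl -/m => <-.
have sum_low := state_sum_lower_bound T0 M0 cc0 adm tr.
rewrite mulrDl -/m in sum_low; rewrite cost_sum_diff.
move: (y1 T) (y2 T) sum_low => z1 z2 sum_low.
split=> [cost_m | [sum_m z12]]; last first.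
  have -> : (z1 + z2) / 2 = m by lra.
  by rewrite z12 subrr mul0r expr0n addr0.
have m0 : 0 < m by rewrite mulr_gt0 ?expR_gt0.
have m2A : m ^+ 2 <= ((z1 + z2) / 2) ^+ 2 by rewrite ler_sqr ?nnegrE; lra.
have D2 := sqr_ge0 ((z1 - z2) / 2).
have /eqP : ((z1 - z2) / 2) ^+ 2 = 0 by lra.
rewrite sqrf_eq0 mulf_eq0 invr_eq0 pnatr_eq0 orbF subr_eq0 => /eqP z12.
split=> //; suff : (z1 + z2) / 2 = m by lra.
have /eqP : ((z1 + z2) / 2) ^+ 2 = m ^+ 2 by lra.
by rewrite eqf_sqr => /orP[/eqP // | /eqP]; lra.
Qed.

Lemma constant_control_cost :
  cost T (fun u => c * expR (- (M / 2) * u)) (fun u => c * expR (- (M / 2) * u))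
  = m ^+ 2.
Proof. by rewrite /cost /m mulNr; field. Qed.

End MinimalCost.

Theorem proposition5 (R : realType) (T M c : R) (a1 a2 x1 x2 : R -> R) :
  0 < T -> 0 < M <= 2 -> 0 < c ->
  admissible T M a1 a2 -> trajectory T a1 a2 x1 x2 c c ->
  (optimal T M c c a1 a2 x1 x2 <->
   ({ae (@lebesgue_measure R), forall t, 0 <= t <= T -> a1 t + a2 t = M}
    /\ x1 T = x2 T)).
Proof.
move=> T0 M02 c0 adm tr; have /andP[M0 _] := M02.
rewrite -(cost_eq_min_iff T0 M0 c0 adm tr).
split=> [[_ [_ opt]] | cost_min].
- apply/eqP; rewrite eq_le (cost_ge_min T0 M0 c0 adm tr) andbT.
  rewrite -(constant_control_cost T M c).
  exact: opt (halves_admissible T M02) (constant_control_trajectory T (M / 2) c).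
- do 2 split=> //; move=> b1 b2 y1 y2 adm' tr'.
  by rewrite cost_min; exact: cost_ge_min adm' tr'.
Qed.
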